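(* Let $R$ be a ring such that the set $\max\mathrm{Den}_l(R)$ of maximal left denominator sets of $R$ is finite, $\max\mathrm{Den}_l(R)=\{S_1,\ldots,S_n\}$ (with the $S_i$ distinct). Let $\mathfrak{a}_i:=\mathrm{ass}(S_i)$, let $\sigma_i:R\to R_i:=S_i^{-1}R$, $r\mapsto \frac{r}{1}=r_i$, and let $\sigma:=\prod_{i=1}^n\sigma_i:R\to\prod_{i=1}^n R_i$, $r\mapsto (r_1,\ldots,r_n)$. The following statements are equivalent: (1) $R$ is a left localizable ring; (2) $\mathfrak{l}_R=0$ and the rings $R_1,\ldots,R_n$ are division rings; (3) the homomorphism $\sigma$ is injective and the rings $R_1,\ldots,R_n$ are division rings.
   Context: All rings are associative with $1$. A multiplicative subset $S$ of a ring $R$ is a subset with $1\in S$, $0\notin S$, closed under multiplication. It is a left Ore set if $Sr\cap Rs\neq\emptyset$ for all $r\in R$, $s\in S$. For a left Ore set $S$, $\mathrm{ass}(S):=\{r\in R: sr=0 \text{ for some } s\in S\}$. A left Ore set $S$ is a left denominator set if $rs=0$ with $r\in R$, $s\in S$ implies $tr=0$ for some $t\in S$. $\mathrm{Den}_l(R)$ denotes the set of left denominator sets of $R$, $S^{-1}R$ the left localization (ring of left fractions $s^{-1}r$) of $R$ at $S\in\mathrm{Den}_l(R)$, and $\max\mathrm{Den}_l(R)$ the set of maximal elements of the poset $(\mathrm{Den}_l(R),\subseteq)$. The left localization radical is $\mathfrak{l}_R:=\bigcap_{S\in\max\mathrm{Den}_l(R)}\mathrm{ass}(S)$. An element $r\in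 R$ is left localizable if $r\in S$ for some $S\in\mathrm{Den}_l(R)$; a ring $R$ is a left localizable ring if every nonzero element of $R$ is left localizable. *)

From HB Require Import structures.
From mathcomp Require Import all_boot all_order all_algebra.
Set Implicit Arguments. Unset Strict Implicit. Unset Printing Implicit Defensive.
Import GRing.Theory.
Local Open Scope ring_scope.

Section Defs.
Variable R : pzRingType.

Definition mult_subset (S : R -> Prop) : Prop :=
  S 1 /\ ~ S 0 /\ (forall a b, S a -> S b -> S (a * b)).

Definition left_ore (S : R -> Prop) : Prop :=
  mult_subset S /\
  (forall r s, S s -> exists s' r', S s' /\ s' * r = r' * s).

Definition ass (S : R -> Prop) (r : R) : Prop := exists s, S s /\ s * r = 0.

Definition left_den (S : R -> Prop) : Prop :=
  left_ore S /\ (forall r s, S s -> r * s = 0 -> exists t, S t /\ t * r = 0).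

Definition max_left_den (S : R -> Prop) : Prop :=
  left_den S /\
  (forall T, left_den T -> (forall x, S x -> T x) -> forall x, T x -> S x).

Definition lrad (r : R) : Prop := forall S, max_left_den S -> ass S r.

Definition left_localizable_elt (r : R) : Prop := exists S, left_den S /\ S r.

Definition left_localizable_ring : Prop :=
  forall r : R, r != 0 -> left_localizable_elt r.

(* (Q, f) is the left localization S^{-1}R of R at S (ring of left fractions
   s^{-1} r), characterized in the standard way: images of S are units,
   every element is a left fraction f(s)^{-1} f(r), and ker f = ass(S). *)
Definition is_left_localization (S : R -> Prop) (Q : pzRingType)
    (f : {rmorphism R -> Q}) : Prop :=
  [/\ (forall s, S s -> exists u, u * f s = 1 /\ f s * u = 1),
      (forall q : Q, exists s r, S s /\
         exists u, [/\ u * f s = 1, f s * u = 1 & q = u * f r])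
    & (forall r, f r = 0 <-> ass S r)].
End Defs.

Definition is_division_ring (Q : pzRingType) : Prop :=
  (1 : Q) != 0 /\ forall x : Q, x != 0 -> exists y, x * y = 1 /\ y * x = 1.

From HB Require Import structures.
From mathcomp Require Import all_boot all_order all_algebra.
From mathcomp Require Import classical_sets.
From Stdlib Require Import Classical.
Import GRing.Theory.
Local Open Scope ring_scope.
Set Implicit Arguments. Unset Strict Implicit.

(* A left localizable ring is reduced, and in a reduced ring the multiplicative
   closure of two left denominator sets S, T with 0 \notin S T is again one.
   Hence two distinct maximal left denominator sets S_i, S_j are separated:
   some element of S_i lies in ass(S_j).  Multiplying such elements yields
   y \in S_i annihilated (from the left) by every other S_j.  If r \notin
   ass(S_i) then r y <> 0 lies in some S_k, which can only be S_i, so r/1 is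
   a unit of R_i: R_i is a division ring.  Conversely a maximal left
   denominator set is saturated, S = {x | x/1 is a unit of S^-1 R}, so when
   every R_i is a division ring each r \notin ass(S_i) lies in S_i.  Finally
   l_R = \bigcap_i ker sigma_i, which gives (2) <-> (3). *)

Definition invertible (Q : pzRingType) (x : Q) := exists u, u * x = 1 /\ x * u = 1.

Section Invertible.
Variable Q : pzRingType.
Implicit Types a b : Q.

Lemma invertibleM a b : invertible a -> invertible b -> invertible (a * b).
Proof.
move=> [u [ua au]] [v [vb bv]]; exists (v * u); split.
  by rewrite mulrA -(mulrA v) ua mulr1 vb.
by rewrite mulrA -(mulrA a) bv mulr1 au.
Qed.

Lemma invertible_mulr a b : invertible (a * b) -> invertible b -> invertible a.
Proof.
move=> [w [wab abw]] [v [vb bv]].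
have wa : w * a = v by rewrite -[w * a]mulr1 -bv mulrA -(mulrA w) wab mul1r.
by exists (b * w); split; rewrite ?mulrA // -mulrA wa bv.
Qed.

End Invertible.

Definition reduced (R : pzRingType) := forall x : R, x * x = 0 -> x = 0.

Lemma left_localizable_reduced (R : pzRingType) :
  left_localizable_ring R -> reduced R.
Proof.
move=> LL x xx0; apply: NNPP => /eqP /LL [T [[[[_ [T0 TM]] _] _] Tx]].
by apply: T0; rewrite -xx0; apply: TM.
Qed.

Section Reduced.
Variable R : pzRingType.
Hypothesis R_reduced : reduced R.
Implicit Types a b c x y z : R.

Lemma reduced_mul_eq0C x y : x * y = 0 -> y * x = 0.
Proof.
move=> xy0; apply: R_reduced.
by rewrite -mulrA (mulrA x) xy0 mul0r mulr0.
Qed.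

Lemma reduced_mul_eq0_ins x y z : x * y = 0 -> x * z * y = 0.
Proof.
move=> xy0; apply: R_reduced.
have -> : x * z * y * (x * z * y) = x * z * (y * x) * (z * y) by rewrite !mulrA.
by rewrite (reduced_mul_eq0C xy0) mulr0 mul0r.
Qed.

Lemma reduced_mul3_eq0_swap12 a b c : a * b * c = 0 -> b * a * c = 0.
Proof.
rewrite -mulrA => /(reduced_mul_eq0_ins c); rewrite mulrA.
move=> /(reduced_mul_eq0_ins a) acbac0; apply: R_reduced.
have -> : b * a * c * (b * a * c) = b * (a * c * b * a * c) by rewrite !mulrA.
by rewrite acbac0 mulr0.
Qed.

Lemma reduced_mul3_eq0_swap23 a b c : a * b * c = 0 -> a * c * b = 0.
Proof.
by move=> /reduced_mul_eq0C; rewrite mulrA => /reduced_mul3_eq0_swap12.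
Qed.

Lemma reduced_mul4_eq0_swap23 x u v y : x * u * v * y = 0 -> x * v * u * y = 0.
Proof.
move=> /reduced_mul_eq0C; rewrite !mulrA => /reduced_mul3_eq0_swap23.
by rewrite -!mulrA => /reduced_mul_eq0C; rewrite !mulrA.
Qed.

End Reduced.

Section AssSets.
Variable R : pzRingType.
Implicit Types S T : R -> Prop.
Local Open Scope classical_set_scope.

Lemma ass_mulr S (y z : R) : ass S y -> ass S (y * z).
Proof. by move=> [s [Ss sy0]]; exists s; split => //; rewrite mulrA sy0 mul0r. Qed.

Lemma ass_mull S (r y : R) : left_ore S -> ass S y -> ass S (r * y).
Proof.
move=> [_ oreS] [s [Ss sy0]]; have [s' [r' [Ss' e]]] := oreS r s Ss.
by exists s'; split => //; rewrite mulrA e -mulrA sy0 mulr0.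
Qed.

Lemma mult_subset_notin_ass S (x : R) : mult_subset S -> S x -> ~ ass S x.
Proof. by move=> [_ [S0 SM]] Sx [s [Ss sx0]]; apply: S0; rewrite -sx0; apply: SM. Qed.

Lemma ass_common_witness (I : eqType) S (T : I -> R -> Prop) (js : seq I) :
    mult_subset S -> (forall j, left_ore (T j)) ->
    (forall j, j \in js -> exists y, S y /\ ass (T j) y) ->
  exists y, S y /\ forall j, j \in js -> ass (T j) y.
Proof.
move=> [S1 [_ SM]] oreT; elim: js => [|j js IH] wit; first by exists 1.
have [y [Sy ass_y]] : exists y, S y /\ forall k, k \in js -> ass (T k) y.
  by apply: IH => k kjs; apply: wit; rewrite inE kjs orbT.
have [z [Sz ass_z]] := wit j (mem_head j js).
exists (y * z); split; first exact: SM.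
move=> k; rewrite inE => /predU1P [->|kjs]; first exact: ass_mull.
exact: ass_mulr (ass_y k kjs).
Qed.

Lemma left_den_bigcup (F : set (set R)) X0 :
    F X0 -> (forall X, F X -> left_den X) -> total_on F subset ->
  left_den (\bigcup_(X in F) X).
Proof.
move=> FX0 denF chainF.
split; [split; [split; [|split]|]|].
- by exists X0 => //; case: (denF X0 FX0) => [[[]]].
- by case=> X /denF [[[_ []]]].
- move=> a b [X FX Xa] [Y FY Yb].
  have [XY|YX] := chainF X Y FX FY.
  + exists Y => //; case: (denF Y FY) => [[[_ [_ YM]] _] _].
    by apply: YM => //; apply: XY.
  + exists X => //; case: (denF X FX) => [[[_ [_ XM]] _] _].
    by apply: XM => //; apply: YX.
- move=> r s [X FX Xs]; case: (denF X FX) => [[_ oreX] _].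
  by have [s' [r' [Xs' e]]] := oreX r s Xs; exists s', r'; split => //; exists X.
- move=> r s [X FX Xs] rs0; case: (denF X FX) => _ denX.
  by have [t [Xt tr0]] := denX r s Xs rs0; exists t; split => //; exists X.
Qed.

Lemma left_den_sub_max (T0 : R -> Prop) :
  left_den T0 -> exists A, max_left_den A /\ forall x, T0 x -> A x.
Proof.
move=> denT0; have [[[T0_1 _] _] _] := denT0.
(* Allowing the empty set lets the union of the empty chain qualify. *)
pose P (X : set R) := X = set0 \/ left_den X /\ T0 `<=` X.
have chainP (F : set (set R)) :
    F `<=` P -> total_on F subset -> P (\bigcup_(X in F) X).
  move=> FP chainF; pose F' := [set X | F X /\ X !=set0].
  have -> : \bigcup_(X in F) X = \bigcup_(X in F') X.
    apply/seteqP; split => x [X FX Xx]; exists X => //; last by case: FX.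
    by split; [|exists x].
  have denF' X : F' X -> left_den X /\ T0 `<=` X.
    by case=> /FP [-> [x []]|].
  case: (classic (exists X, F' X)) => [[X0 F'X0]|noF'].
    right; have [_ T0X0] := denF' _ F'X0; split; last by move=> x /T0X0; exists X0.
    apply: (left_den_bigcup F'X0) => [X /denF' []//|X Y [FX _] [FY _]].
    exact: chainF.
  by left; apply/seteqP; split => x // [X F'X _]; apply: noF'; exists X.
have [A [[A0|[denA T0A]] maxA]] := Zorn_bigcup chainP.
  by exfalso; apply: (maxA T0); [rewrite A0; split => // /(_ 1 T0_1)|right; split].
exists A; split => //; split => // T denT AT x Tx; apply: NNPP => nAx.
by apply: (maxA T); [split => // TA; apply/nAx/TA | right; split => // y /T0A /AT].
Qed.

End AssSets.

Section MulClosure.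
Variable R : pzRingType.
Implicit Types S T : R -> Prop.

Inductive mul_closure S T : R -> Prop :=
| mul_closure_l x : S x -> mul_closure S T x
| mul_closure_r x : T x -> mul_closure S T x
| mul_closure_mul x y :
    mul_closure S T x -> mul_closure S T y -> mul_closure S T (x * y).

Lemma mul_closure_ore S T (r x : R) : left_ore S -> left_ore T ->
  mul_closure S T x -> exists s r', mul_closure S T s /\ s * r = r' * x.
Proof.
move=> [_ oreS] [_ oreT] Mx; elim: Mx r => {x} [x Sx|x Tx|x y _ IHx _ IHy] r.
- have [s [r' [Ss e]]] := oreS r x Sx.
  by exists s, r'; split => //; apply: mul_closure_l.
- have [s [r' [Ts e]]] := oreT r x Tx.
  by exists s, r'; split => //; apply: mul_closure_r.
- have [s2 [r2 [Ms2 e2]]] := IHy r.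
  have [s1 [r1 [Ms1 e1]]] := IHx r2.
  exists (s1 * s2), r1; split; first exact: mul_closure_mul.
  by rewrite -mulrA e2 mulrA e1 mulrA.
Qed.

Hypothesis R_reduced : reduced R.

(* In a reduced ring zero products only see which factors occur, not their
   order, so every element of the closure behaves like some [s * t]. *)
Lemma reduced_mul_closure_dominated S T (x : R) :
    mult_subset S -> mult_subset T -> mul_closure S T x ->
  exists s t, [/\ S s, T t & forall a b, a * x * b = 0 -> a * (s * t) * b = 0].
Proof.
move=> [S1 [_ SM]] [T1 [_ TM]]; elim=> {x} [x Sx|x Tx|].
- by exists x, 1; split => // a b; rewrite mulr1.
- by exists 1, x; split => // a b; rewrite mul1r.
move=> x y _ [s1 [t1 [Ss1 Tt1 dom1]]] _ [s2 [t2 [Ss2 Tt2 dom2]]].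
exists (s1 * s2), (t1 * t2); split; [exact: SM | exact: TM |] => a b axyb0.
have /dom1 e1 : a * x * (y * b) = 0 by move: axyb0; rewrite !mulrA.
have /dom2 e2 : a * (s1 * t1) * y * b = 0 by move: e1; rewrite !mulrA.
have /(reduced_mul4_eq0_swap23 R_reduced) : a * s1 * t1 * s2 * (t2 * b) = 0.
  by move: e2; rewrite !mulrA.
by rewrite !mulrA.
Qed.

Lemma reduced_left_den_mul_closure S T : left_den S -> left_den T ->
  (forall s t, S s -> T t -> s * t <> 0) -> left_den (mul_closure S T).
Proof.
move=> [oreS denS] [oreT denT] ST_neq0.
have msS := oreS.1; have msT := oreT.1.
split; [split; [split; [|split]|] |].
- by apply: mul_closure_l; case: msS.
- move=> /(reduced_mul_closure_dominated msS msT) [s [t [Ss Tt dom]]].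
  by apply: (ST_neq0 s t Ss Tt); have := dom 1 1; rewrite !mul1r !mulr1; apply.
- exact: mul_closure_mul.
- by move=> r s; apply: mul_closure_ore.
- by move=> r x Mx rx0; exists x; split => //; apply: reduced_mul_eq0C.
Qed.

Lemma reduced_max_left_den_separated S T :
    max_left_den S -> max_left_den T -> ~ (forall x, S x <-> T x) ->
  exists s, S s /\ ass T s.
Proof.
move=> [denS maxS] [denT maxT] neST; apply: NNPP => no_ass.
have ST_neq0 s t : S s -> T t -> s * t <> 0.
  move=> Ss Tt /(reduced_mul_eq0C R_reduced) ts0; apply: no_ass.
  by exists s; split => //; exists t.
have denM := reduced_left_den_mul_closure denS denT ST_neq0.
have TS x : T x -> S x.
  move=> Tx; apply: (maxS _ denM) => [y|]; first exact: mul_closure_l.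
  exact: mul_closure_r.
by apply: neST => x; split; [exact: maxT _ denS TS x | exact: TS].
Qed.

End MulClosure.

Section Localization.
Variables (R : pzRingType) (S : R -> Prop) (Q : pzRingType).
Variable f : {rmorphism R -> Q}.
Hypotheses (msS : mult_subset S) (locS : is_left_localization S f).

Lemma loc_invertible s : S s -> invertible (f s).
Proof. by case: locS => inv _ _; apply: inv. Qed.

Lemma loc_fraction q : exists s r, S s /\
  exists u, [/\ u * f s = 1, f s * u = 1 & q = u * f r].
Proof. by case: locS => _ frac _; apply: frac. Qed.

Lemma loc_kerE r : f r = 0 <-> ass S r.
Proof. by case: locS => _ _ ker; apply: ker. Qed.

Lemma loc_oner_neq0 : (1 : Q) != 0.
Proof.
apply/eqP => one0; have /loc_kerE : f 1 = 0 by rewrite rmorph1.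
by apply: mult_subset_notin_ass; case: msS.
Qed.

Lemma left_den_invertible_preimage : left_den (fun x => invertible (f x)).
Proof.
split; [split; [split; [|split]|]|].
- by exists 1; rewrite rmorph1 mulr1.
- by move=> [u [u0 _]]; move: loc_oner_neq0; rewrite -u0 rmorph0 mulr0 eqxx.
- by move=> a b fa fb; rewrite rmorphM; apply: invertibleM.
- move=> r x [u [uf fu]].
  have [s0 [r1 [Ss0 [v [vs sv e]]]]] := loc_fraction (f r * u).
  have fr1 : f r1 = f s0 * (f r * u) by rewrite e mulrA sv mul1r.
  have /loc_kerE [t [St e0]] : f (s0 * r - r1 * x) = 0.
    by rewrite rmorphB !rmorphM fr1 -!mulrA uf mulr1 subrr.
  exists (t * s0), (t * r1); split.
    by rewrite rmorphM; apply: invertibleM; apply: loc_invertible.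
  by move: e0; rewrite mulrBr => /eqP; rewrite subr_eq0 => /eqP; rewrite !mulrA.
- move=> r x [u [uf fu]] rx0.
  have /loc_kerE [t [St tr0]] : f r = 0.
    by rewrite -[f r]mulr1 -fu mulrA -rmorphM rx0 rmorph0 mul0r.
  by exists t; split => //; apply: loc_invertible.
Qed.

Lemma max_left_den_invertible_preimage x :
  max_left_den S -> invertible (f x) -> S x.
Proof.
move=> [_ maxS]; apply: (maxS _ left_den_invertible_preimage).
exact: loc_invertible.
Qed.

End Localization.

Section FiniteMaxDen.
Variables (R : pzRingType) (n : nat) (S : 'I_n -> R -> Prop).
Variables (Q : 'I_n -> pzRingType) (f : forall i, {rmorphism R -> Q i}).
Hypothesis S_inj : forall i j, (forall x, S i x <-> S j x) -> i = j.
Hypothesis max_denE :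
  forall T, max_left_den T <-> exists i, forall x, T x <-> S i x.
Hypothesis S_loc : forall i, is_left_localization (S i) (f i).

Lemma S_max i : max_left_den (S i).
Proof. by apply/max_denE; exists i. Qed.

Lemma S_ore i : left_ore (S i).
Proof. by case: (S_max i) => [[]]. Qed.

Lemma S_mult i : mult_subset (S i).
Proof. by case: (S_ore i). Qed.

Lemma lradE (r : R) : lrad r <-> forall i, ass (S i) r.
Proof.
split=> [lr i | ass_r T /max_denE [i TS]]; first exact/lr/S_max.
by have [s [Ss sr0]] := ass_r i; exists s; split => //; apply/TS.
Qed.

Lemma lrad_kerE (r : R) : lrad r <-> forall i, f i r = 0.
Proof. by rewrite lradE; split=> h i; apply/(loc_kerE (S_loc i)). Qed.

Lemma lrad_eq0_injective :
  (forall r : R, lrad r -> r = 0) <->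
  (forall r1 r2 : R, (forall i, f i r1 = f i r2) -> r1 = r2).
Proof.
split=> [lr0 r1 r2 f12 | inj r /lrad_kerE fr0].
  apply/eqP; rewrite -subr_eq0; apply/eqP/lr0/lrad_kerE => i.
  by rewrite rmorphB f12 subrr.
by apply: inj => i; rewrite fr0 rmorph0.
Qed.

Lemma localizable_mem_S (r : R) :
  left_localizable_ring R -> r != 0 -> exists i, S i r.
Proof.
move=> LL /LL [T [denT Tr]].
have [A [/max_denE [i AS] TA]] := left_den_sub_max denT.
by exists i; apply/AS/TA.
Qed.

Lemma localizable_lrad_eq0 (r : R) : left_localizable_ring R -> lrad r -> r = 0.
Proof.
move=> LL lr; apply: NNPP => /eqP /(localizable_mem_S LL) [i Sr].
exact: mult_subset_notin_ass (S_mult i) Sr ((lradE r).1 lr i).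
Qed.

Lemma reduced_ass_all_but i :
  reduced R -> exists y, S i y /\ forall j, j != i -> ass (S j) y.
Proof.
move=> R_reduced.
have [|y [Sy ass_y]] :=
  @ass_common_witness _ _ (S i) S [seq j <- enum 'I_n | j != i] (S_mult i) S_ore.
  move=> j; rewrite mem_filter => /andP [ji _].
  apply: (reduced_max_left_den_separated R_reduced (S_max i) (S_max j)) => SiSj.
  by move/eqP: ji; apply; apply/esym/S_inj.
by exists y; split => // j ji; apply: ass_y; rewrite mem_filter ji mem_enum.
Qed.

Lemma localizable_division i :
  left_localizable_ring R -> is_division_ring (Q i).
Proof.
move=> LL.
have [y [Sy ass_y]] := reduced_ass_all_but i (left_localizable_reduced LL).
split=> [|q]; first exact: loc_oner_neq0 (S_mult i) (S_loc i).
have [s [r [Ss [u [us su ->]]]]] := loc_fraction (S_loc i) q => q_neq0.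
suff /(invertibleM (ex_intro _ (f i s) (conj su us))) [v [vq qv]] :
  invertible (f i r) by exists v.
have r_nass : ~ ass (S i) r.
  by move/(loc_kerE (S_loc i)) => fr0; move: q_neq0; rewrite fr0 mulr0 eqxx.
have ry_neq0 : r * y != 0.
  apply/eqP => ry0; apply: r_nass; have [[_ denS] _] := S_max i.
  by have [t [St tr0]] := denS r y Sy ry0; exists t.
have Sry : S i (r * y).
  have [k Sk] := localizable_mem_S LL ry_neq0; case: (eqVneq k i) => [<- // | ki].
  case: (mult_subset_notin_ass (S_mult k) Sk).
  exact: ass_mull (S_ore k) (ass_y k ki).
apply: (@invertible_mulr _ _ (f i y)); last exact: (loc_invertible (S_loc i) Sy).
by rewrite -rmorphM; exact: (loc_invertible (S_loc i) Sry).
Qed.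

Lemma division_localizable :
    (forall r : R, lrad r -> r = 0) -> (forall i, is_division_ring (Q i)) ->
  left_localizable_ring R.
Proof.
move=> lr0 div r r_neq0.
have [i fr_neq0] : exists i, f i r != 0.
  apply: NNPP => all0; move/eqP: r_neq0; apply; apply/lr0/lrad_kerE => i.
  by apply: NNPP => fr_neq0; apply: all0; exists i; apply/eqP.
exists (S i); split; first exact: (S_max i).1.
apply: (max_left_den_invertible_preimage (S_mult i) (S_loc i) (S_max i)).
by have [_ /(_ _ fr_neq0) [v [rv vr]]] := div i; exists v.
Qed.

End FiniteMaxDen.

Unset Implicit Arguments.

Theorem theorem3p5 (R : pzRingType) (n : nat) (S : 'I_n -> R -> Prop)
    (Q : 'I_n -> pzRingType) (f : forall i, {rmorphism R -> Q i}) :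
  (forall i j, (forall x, S i x <-> S j x) -> i = j) ->
  (forall T : R -> Prop, max_left_den T <-> exists i, forall x, T x <-> S i x) ->
  (forall i, is_left_localization (S i) (f i)) ->
  (left_localizable_ring R <->
     ((forall r : R, lrad r -> r = 0) /\ (forall i, is_division_ring (Q i)))) /\
  (((forall r : R, lrad r -> r = 0) /\ (forall i, is_division_ring (Q i))) <->
     ((forall r1 r2 : R, (forall i, f i r1 = f i r2) -> r1 = r2) /\
      (forall i, is_division_ring (Q i)))).
Proof.
move=> S_inj max_denE S_loc; split.
  split=> [LL | [lr0 div]]; last first.
    exact: (division_localizable max_denE S_loc lr0 div).
  split=> [r | i]; first exact: (localizable_lrad_eq0 max_denE LL).
  exact: localizable_division S_inj max_denE S_loc i LL.
have lrad_inj := lrad_eq0_injective max_denE S_loc.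
by split=> -[lr0 div]; split=> //; apply/lrad_inj.
Qed.
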